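(* Let $(n_1, n_2, 2, n_4, \dots, n_k)$ be an integer partition (with nonincreasing parts) in which $n_2 \geqslant 3$, and suppose it corresponds to the eigenvalue $\lambda$. Then the partition $(n_1, n_2, 3, n_4, \dots, n_k)$ also corresponds to the eigenvalue $\lambda$.
   Context: An integer partition $(n_1,\dots,n_k)$ of $n$ (with $n_1\geqslant n_2\geqslant\dots\geqslant n_k\geqslant 1$ and $\sum_j n_j=n$) is said to correspond to the eigenvalue $\lambda$ if $\lambda=\sum_{j=1}^k \frac{n_j(n_j-2j+1)}{2}$; this number is the eigenvalue of the Transposition graph $T_n=\mathrm{Cay}(\mathrm{Sym}_n,T)$ ($T$ the set of all transpositions) associated with the irreducible character of $\mathrm{Sym}_n$ indexed by the partition. *)

From mathcomp Require Import all_boot all_order all_algebra.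
Set Implicit Arguments. Unset Strict Implicit. Unset Printing Implicit Defensive.
Import Order.TTheory GRing.Theory Num.Theory.

Definition is_partition (s : seq nat) : bool :=
  sorted geq s && all (fun x => 0 < x)%N s.

Local Open Scope ring_scope.

(* lambda(s) = sum_{j=1}^k n_j (n_j - 2 j + 1) / 2, computed in rat
   (index j is 1-based; i : 'I_k is 0-based so j = i+1). *)
Definition partition_eigenvalue (s : seq nat) : rat :=
  \sum_(i < size s)
     ((nth 0%N s i)%:R * ((nth 0%N s i)%:R - 2 * (i.+1)%:R + 1)) / 2.

Definition corresponds (s : seq nat) (lam : rat) : Prop :=
  is_partition s /\ lam = partition_eigenvalue s.

(* Part j of a partition (1-based) contributes n_j (n_j - (2j - 1)) / 2 to the
   eigenvalue, a quadratic in n_j that is symmetric under n_j |-> 2j - 1 - n_j.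
   For j = 3 this exchanges the parts 2 and 3, and n_2 >= 3 keeps the parts
   nonincreasing. *)
From mathcomp Require Import all_boot all_order all_algebra.
From mathcomp Require Import ring.
Import GRing.Theory.

Lemma is_partition_cons (x : nat) (s : seq nat) :
  is_partition (x :: s) = [&& 0 < x, head 0 s <= x & is_partition s]%N.
Proof.
rewrite /is_partition /=.
case: s => [|y s] /=; rewrite ?andbT //.
by rewrite -andbA [RHS]andbCA [in RHS](andbCA (0 < x)%N).
Qed.

Lemma is_partition_raise_head (x y : nat) (s : seq nat) :
  (x <= y)%N -> is_partition (x :: s) -> is_partition (y :: s).
Proof.
move=> le_xy; rewrite !is_partition_cons => /and3P[x_gt0 head_le ->].
by rewrite (leq_trans x_gt0 le_xy) (leq_trans head_le le_xy).
Qed.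

Local Open Scope ring_scope.

Lemma partition_eigenvalue_set_nth (s : seq nat) (i b : nat) :
  (i < size s)%N -> (nth 0 s i + b = 2 * i + 1)%N ->
  partition_eigenvalue (set_nth 0 s i b) = partition_eigenvalue s.
Proof.
move=> lt_i_s reflect_b; rewrite /partition_eigenvalue size_set_nth.
rewrite (maxn_idPr lt_i_s); apply: eq_bigr => j _; rewrite nth_set_nth /=.
case: eqP => [-> | _] //.
have -> : b%:R = 2 * (i.+1)%:R - 1 - (nth 0 s i)%:R :> rat.
  by rewrite -[b%:R](addKr (nth 0 s i)%:R) -natrD reflect_b natrD natrM; ring.
by ring.
Qed.

Theorem lemma3 (n1 n2 : nat) (rest : seq nat) (lam : rat) :
  (3 <= n2)%N ->
  corresponds [:: n1, n2, 2%N & rest] lam ->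
  corresponds [:: n1, n2, 3%N & rest] lam.
Proof.
move=> n2_ge3 [part_s ->]; split.
  move: part_s; rewrite !(is_partition_cons n1) !(is_partition_cons n2) /=.
  case/and3P=> -> -> /and3P[-> _ part_tail] /=.
  by rewrite n2_ge3 /=; apply: is_partition_raise_head part_tail.
by rewrite -[[:: n1, n2, 3%N & rest]]/(set_nth 0 [:: n1, n2, 2%N & rest] 2 3)
  partition_eigenvalue_set_nth.
Qed.
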